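(* Let $p$ and $q$ be prime numbers, let $u \geqslant 1$ and $n \geqslant q$ be integers, and let $$f(x) = a_{n}x^{n} + a_{n-1}x^{n-1} + \cdots + a_{q}x^{q} + p^{u} \in \mathbb{Z}[x]$$ with $a_n \neq 0$. Suppose that $p \nmid a_{q}$, that $q \nmid u$, and that $$p^{u} > |a_{n}| + |a_{n-1}| + \cdots + |a_{q}|.$$ Then $f(x)$ is irreducible over $\mathbb{Q}$. *)

From mathcomp Require Import all_boot all_order all_algebra.
Set Implicit Arguments. Unset Strict Implicit. Unset Printing Implicit Defensive.
Import Order.TTheory GRing.Theory Num.Theory.
Local Open Scope ring_scope.

Definition fpoly (a : nat -> int) (p u q n : nat) : {poly int} :=
  ((p ^ u)%N%:Z)%:P + \sum_(q <= i < n.+1) (a i)%:P * 'X^i.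

(* Suppose  f = g * h  over Z.  Weigh the monomial  c x^k  by
   w(c, k) = q * v_p(c) + u * k.  For f the minimal weight is q*u, attained
   exactly at the monomials  p^u  and  a_q x^q  (a Newton polygon at p with a
   single edge of slope -u/q and no interior lattice point, since q does not
   divide u).  Minimal weights add under multiplication, and so do the first
   and the last index at which the minimum is reached.  Hence g and h reach
   their minima at index 0 and at indices i2, j2 with i2 + j2 = q; equality of
   the weights forces q | i2, so {i2, j2} = {0, q}, and the factor reaching
   its minimum at q has valuation at least u at 0: the other factor has
   constant term +-1.  Finally, a nonconstant integer polynomial with constant
   term +-1 has a complex root in the closed unit disk (the product of its
   roots has modulus at most 1), whereas f has none there because
   |f(z) - p^u| <= sum |a_i| < p^u.  So one factor is constant. *)

From mathcomp Require Import all_boot all_order all_algebra.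
From mathcomp Require Import algC zify.
Import Order.TTheory GRing.Theory Num.Theory.
Local Open Scope ring_scope.
Set Implicit Arguments. Unset Strict Implicit.

Lemma coef_lt_size (R : nzSemiRingType) (g : {poly R}) i : g`_i != 0 -> (i < size g)%N.
Proof. by apply: contraR; rewrite -leqNgt => /(nth_default 0) ->. Qed.

Section WeightedValuation.

Variables (p q u : nat).
Hypotheses (p_prime : prime p) (q_gt0 : (0 < q)%N).

Definition weight (c : int) (k : nat) : nat := (q * logn p `|c| + u * k)%N.

(* c x^k has weight at least M; the zero monomial has infinite weight. *)
Definition weight_ge (M : nat) (c : int) (k : nat) : bool :=
  (c == 0) || (M <= weight c k)%N.

Definition weight_eq (M : nat) (c : int) (k : nat) : bool :=
  (c != 0) && (weight c k == M).

Lemma weight_eq_ge M N c k : weight_eq M c k -> weight_ge N c k = (N <= M)%N.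
Proof. by case/andP=> c0 /eqP cM; rewrite /weight_ge (negPf c0) cM. Qed.

Lemma weight_ge_succ M c k :
  weight_ge M c k -> ~~ weight_eq M c k -> weight_ge M.+1 c k.
Proof.
rewrite /weight_ge /weight_eq; case: eqP => //= _ Mw.
by rewrite ltn_neqAle Mw andbT eq_sym.
Qed.

Lemma pfactor_dvdz_logn e (c : int) :
  c != 0 -> ((p ^ e)%N%:Z %| c)%Z = (e <= logn p `|c|)%N.
Proof. by move=> c0; rewrite dvdzE /= pfactor_dvdn // absz_gt0. Qed.

(* The valuation of a sum is at least the smaller one, so a weight bound at a
   fixed index is preserved by addition ... *)
Lemma weight_geD M k c1 c2 :
  weight_ge M c1 k -> weight_ge M c2 k -> weight_ge M (c1 + c2) k.
Proof.
wlog le12 : c1 c2 / (logn p `|c1| <= logn p `|c2|)%N.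
  move=> W h1 h2; case: (leqP (logn p `|c1|) (logn p `|c2|)) => [le|/ltnW le].
    exact: W.
  by rewrite addrC; apply: W.
rewrite /weight_ge; have [->|c1n0] := eqVneq c1 0; first by rewrite add0r => _.
have [->|c2n0] := eqVneq c2 0; first by rewrite addr0 (negPf c1n0) => h _; exact: h.
have [//|sn0] := eqVneq (c1 + c2) 0; rewrite /= => M1 _.
apply: leq_trans M1 _; rewrite leq_add2r leq_mul2l; apply/orP; right.
by rewrite -pfactor_dvdz_logn // rpredD // pfactor_dvdz_logn.
Qed.
Lemma weight_ge_sum M k (I : Type) (r : seq I) (P : pred I) (F : I -> int) :
  (forall i, P i -> weight_ge M (F i) k) -> weight_ge M (\sum_(i <- r | P i) F i) k.
Proof.
by move=> FM; apply: (big_ind (fun c => weight_ge M c k)) => // c1 c2; apply: weight_geD.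
Qed.

Lemma weight_geM A B a b x y :
  weight_ge A x a -> weight_ge B y b -> weight_ge (A + B) (x * y) (a + b).
Proof.
rewrite /weight_ge /weight mulf_eq0.
have [//|x0] := eqVneq x 0; have [//|y0] := eqVneq y 0.
by rewrite /= abszM lognM ?absz_gt0 //; lia.
Qed.

Lemma weight_geM_strict A B a b x y :
  weight_ge A x a -> weight_ge B y b ->
  weight_ge A.+1 x a || weight_ge B.+1 y b -> weight_ge (A + B).+1 (x * y) (a + b).
Proof.
move=> xA yB /orP[xA1|yB1]; [rewrite -addSn | rewrite -addnS]; exact: weight_geM.
Qed.

Lemma weight_eqM A B a b x y :
  weight_eq A x a -> weight_eq B y b -> weight_eq (A + B) (x * y) (a + b).
Proof.
rewrite /weight_eq /weight => /andP[x0 /eqP<-] /andP[y0 /eqP<-].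
by rewrite mulf_neq0 //= abszM lognM ?absz_gt0 //; apply/eqP; lia.
Qed.

(* Adding strictly heavier terms to a monomial of weight M keeps the weight:
   the valuation of the sum is that of the lighter summand. *)
Lemma weight_eqD M k c r :
  weight_eq M c k -> weight_ge M.+1 r k -> weight_eq M (c + r) k.
Proof.
move=> cM; have [->|r0] := eqVneq r 0; first by rewrite addr0.
case/andP: cM => c0 /eqP <-; rewrite /weight_ge (negPf r0) /=.
rewrite /weight ltn_add2r ltn_mul2l q_gt0 /= => vcr.
set e := logn p `|c| in vcr *.
have pe1_r : ((p ^ e.+1)%N%:Z %| r)%Z by rewrite pfactor_dvdz_logn.
have pe1_cr : ~~ ((p ^ e.+1)%N%:Z %| c + r)%Z.
  by rewrite (rpredDr _ pe1_r) pfactor_dvdz_logn // ltnn.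
have cr0 : c + r != 0 by apply: contraNneq pe1_cr => ->; exact: dvdz0.
have pe_cr : ((p ^ e)%N%:Z %| c + r)%Z.
  by rewrite rpredD // pfactor_dvdz_logn // ltnW.
move: pe_cr pe1_cr; rewrite !pfactor_dvdz_logn // -ltnNge ltnS => ge le.
by rewrite /weight_eq cr0 /weight; apply/eqP; congr (_ * _ + _)%N; apply/eqP;
  rewrite eqn_leq ge le.
Qed.

Lemma coefM_weight_ge M k (g h : {poly int}) :
  (forall j, (j <= k)%N -> weight_ge M (g`_j * h`_(k - j)) k) ->
  weight_ge M (g * h)`_k k.
Proof. by move=> H; rewrite coefM; apply: weight_ge_sum => -[j /= jk] _; apply: H. Qed.

Lemma coefM_weight_eq M k j0 (g h : {poly int}) : (j0 <= k)%N ->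
  weight_eq M (g`_j0 * h`_(k - j0)) k ->
  (forall j, (j <= k)%N -> j != j0 -> weight_ge M.+1 (g`_j * h`_(k - j)) k) ->
  weight_eq M (g * h)`_k k.
Proof.
move=> j0k Hj0 H; rewrite coefM (bigD1 (Ordinal (j0k : (j0 < k.+1)%N))) //=.
apply: weight_eqD => //; apply: weight_ge_sum => -[j /= jk] jj0; by apply: H.
Qed.

Definition min_weight (g : {poly int}) (M i1 i2 : nat) : Prop :=
  [/\ forall k, weight_ge M g`_k k,
      weight_eq M g`_i1 i1, weight_eq M g`_i2 i2,
      forall k, (k < i1)%N -> weight_ge M.+1 g`_k k &
      forall k, (i2 < k)%N -> weight_ge M.+1 g`_k k].

Lemma min_weight_exists (g : {poly int}) :
  g != 0 -> exists M i1 i2, min_weight g M i1 i2.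
Proof.
move=> g0; pose P m := [exists k : 'I_(size g), weight_eq m g`_k k].
have exP : exists m, P m.
  have last_lt : ((size g).-1 < size g)%N by rewrite prednK // size_poly_gt0.
  exists (weight g`_(size g).-1 (size g).-1); apply/existsP; exists (Ordinal last_lt).
  by rewrite /weight_eq eqxx andbT -lead_coefE lead_coef_eq0.
have [M PM minM] := ex_minnP exP.
have geM k : weight_ge M g`_k k.
  rewrite /weight_ge; have [//|gk0] := eqVneq; apply: minM; apply/existsP.
  by exists (Ordinal (coef_lt_size gk0)); rewrite /weight_eq gk0 eqxx.
pose Q i := weight_eq M g`_i i.
have exQ : exists i, Q i by case/existsP: PM => k; exists k.
have boundQ i : Q i -> (i <= size g)%N by case/andP=> /coef_lt_size/ltnW.
have [i1 Qi1 min1] := ex_minnP exQ.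
have [i2 Qi2 max2] := ex_maxnP exQ boundQ.
exists M, i1, i2; split=> // k lt; apply: weight_ge_succ => //;
  apply: contraTN lt => Qk; rewrite -leqNgt; [exact: min1 | exact: max2].
Qed.

(* Minimal weights add under multiplication, and so do the first and the last
   indices reaching them (Gauss's lemma for the weighted valuation). *)
Lemma min_weightM (g h : {poly int}) Mg Mh i1 i2 j1 j2 :
  min_weight g Mg i1 i2 -> min_weight h Mh j1 j2 ->
  min_weight (g * h) (Mg + Mh) (i1 + j1) (i2 + j2).
Proof.
move=> [gM gi1 gi2 g_lo g_hi] [hM hj1 hj2 h_lo h_hi].
have pair_lo j l : (j < i1)%N || (l < j1)%N ->
    weight_ge (Mg + Mh).+1 (g`_j * h`_l) (j + l).
  by case/orP=> lt; apply: weight_geM_strict => //; [rewrite g_lo | rewrite h_lo ?orbT].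
have pair_hi j l : (i2 < j)%N || (j2 < l)%N ->
    weight_ge (Mg + Mh).+1 (g`_j * h`_l) (j + l).
  by case/orP=> lt; apply: weight_geM_strict => //; [rewrite g_hi | rewrite h_hi ?orbT].
have split_idx k j : (j <= k)%N -> k = (j + (k - j))%N by move=> jk; rewrite subnKC.
split.
- move=> k; apply: coefM_weight_ge => j /split_idx {2}->; exact: weight_geM.
- apply: coefM_weight_eq; first exact: leq_addr.
    by rewrite addKn; apply: weight_eqM.
  move=> j jk ji1; rewrite {2}(split_idx _ _ jk); apply: pair_lo; lia.
- apply: coefM_weight_eq; first exact: leq_addr.
    by rewrite addKn; apply: weight_eqM.
  move=> j jk ji2; rewrite {2}(split_idx _ _ jk); apply: pair_hi; lia.
- move=> k lt; apply: coefM_weight_ge => j jk; rewrite {2}(split_idx _ _ jk).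
  apply: pair_lo; lia.
- move=> k lt; apply: coefM_weight_ge => j jk; rewrite {2}(split_idx _ _ jk).
  apply: pair_hi; lia.
Qed.

Lemma weight_eq_uniq M N c k : weight_eq M c k -> weight_eq N c k -> M = N.
Proof. by case/andP=> _ /eqP<- /andP[_ /eqP]. Qed.

Lemma min_weight_profile (F : {poly int}) W M k1 k2 :
  weight_eq W F`_0 0 -> weight_eq W F`_q q ->
  (forall k, (0 < k < q)%N -> F`_k = 0) ->
  (forall k, (q < k)%N -> weight_ge W.+1 F`_k k) ->
  min_weight F M k1 k2 -> [/\ M = W, k1 = 0%N & k2 = q].
Proof.
move=> F0 Fq Fgap Fhi [FM Fk1 Fk2 F_lo F_hi].
have MW : (M <= W)%N by rewrite -(weight_eq_ge _ F0) FM.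
have extremal k : weight_eq M F`_k k -> k = 0%N \/ k = q.
  move=> Fk; case: (ltngtP k q) => [kq|qk|->]; last by right.
  - case: (posnP k) => [|k0]; first by left.
    by move: Fk; rewrite Fgap ?k0 ?kq.
  - by move: (Fhi k qk); rewrite (weight_eq_ge _ Fk) ltnNge MW.
have eMW : M = W.
  by case: (extremal _ Fk1) => k10; move: Fk1; rewrite k10 => /weight_eq_uniq; apply.
subst W; split=> //.
- case: (extremal _ Fk1) => // k1q; move: (F_lo 0%N); rewrite k1q q_gt0.
  by rewrite (weight_eq_ge _ F0) ltnn => /(_ isT).
- case: (extremal _ Fk2) => // k20; move: (F_hi q); rewrite k20 q_gt0.
  by rewrite (weight_eq_ge _ Fq) ltnn => /(_ isT).
Qed.

Lemma weight_eq_shift (c d : int) M i :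
  weight_eq M c 0 -> weight_eq M d i -> (q * logn p `|c| = q * logn p `|d| + u * i)%N.
Proof. by case/andP=> _ /eqP; rewrite /weight muln0 addn0 => -> /andP[_ /eqP]. Qed.

Lemma unit_cofactor (x y : int) :
  x * y = (p ^ u)%N%:Z -> (u <= logn p `|y|)%N -> absz x = 1%N.
Proof.
move=> xy le_u.
have pu_gt0 : (0 < p ^ u)%N by rewrite expn_gt0 prime_gt0.
have xy_abs : (absz x * absz y = p ^ u)%N by rewrite -abszM xy.
have /andP[x0 y0] : (0 < absz x)%N && (0 < absz y)%N by rewrite -muln_gt0 xy_abs.
have : (p ^ u <= absz y)%N by rewrite dvdn_leq // pfactor_dvdn.
rewrite -xy_abs -{2}[absz y]mul1n leq_pmul2r // => x_le1.
by apply/eqP; rewrite eqn_leq x_le1.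
Qed.

Lemma min_weight_unit_constant (g h : {poly int}) Mg Mh i2 j2 :
  prime q -> ~~ (q %| u)%N ->
  min_weight g Mg 0 i2 -> min_weight h Mh 0 j2 -> (i2 + j2)%N = q ->
  g`_0 * h`_0 = (p ^ u)%N%:Z -> absz g`_0 = 1%N \/ absz h`_0 = 1%N.
Proof.
move=> q_prime q_ndvd_u [_ g0 gi2 _ _] [_ h0 hj2 _ _] i2j2 gh0.
have q_dvd_shift (c d : int) M i : weight_eq M c 0 -> weight_eq M d i -> (q %| i)%N.
  move=> c0 di; have : (q %| u * i)%N.
    rewrite -(@dvdn_addr (q * logn p `|d|)) ?dvdn_mulr //.
    by rewrite -(weight_eq_shift c0 di) dvdn_mulr.
  by rewrite Euclid_dvdM // (negPf q_ndvd_u).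
have shift_ge (c d : int) M : weight_eq M c 0 -> weight_eq M d q -> (u <= logn p `|c|)%N.
  move=> c0 dq; rewrite -(leq_pmul2l q_gt0) (weight_eq_shift c0 dq) mulnC.
  exact: leq_addl.
have [i20|i2_gt0] := posnP i2.
- rewrite i20 add0n in i2j2; subst i2 j2.
  by left; apply: unit_cofactor gh0 _; apply: shift_ge h0 hj2.
- have q_le_i2 : (q <= i2)%N by apply: dvdn_leq => //; apply: q_dvd_shift g0 gi2.
  have [i2q j20] : i2 = q /\ j2 = 0%N by lia.
  subst i2 j2; right; apply: unit_cofactor (shift_ge _ _ _ g0 gi2).
  by rewrite mulrC.
Qed.

Lemma newton_unit_constant_factor (F g h : {poly int}) :
  prime q -> (0 < u)%N -> ~~ (q %| u)%N ->
  F`_0 = (p ^ u)%N%:Z -> (forall k, (0 < k < q)%N -> F`_k = 0) ->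
  ~~ (p%:Z %| F`_q)%Z -> F = g * h -> absz g`_0 = 1%N \/ absz h`_0 = 1%N.
Proof.
move=> q_prime u_gt0 q_ndvd_u F0 Fgap Fq FE.
have F0w : weight_eq (q * u) F`_0 0.
  by rewrite /weight_eq F0 eqz_nat -lt0n expn_gt0 prime_gt0 //= /weight pfactorK // muln0 addn0.
have Fqw : weight_eq (q * u) F`_q q.
  have Fq0 : F`_q != 0 by apply: contraNneq Fq => ->; exact: dvdz0.
  have vq : logn p `|F`_q| = 0%N.
    by apply/eqP; rewrite -leqn0 leqNgt -(pfactor_dvdz_logn 1 Fq0) expn1; exact: Fq.
  by rewrite /weight_eq Fq0 /weight vq muln0 add0n mulnC eqxx.
have Fhi k : (q < k)%N -> weight_ge (q * u).+1 F`_k k.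
  move=> qk; rewrite /weight_ge /weight; apply/orP; right.
  by rewrite mulnC (leq_trans _ (leq_addl _ _)) // ltn_pmul2l.
have [g0 h0] : g != 0 /\ h != 0.
  by apply/andP; rewrite -negb_or -mulf_eq0 -FE; apply: contraTneq F0w => ->; rewrite coef0.
have [Mg [i1 [i2 gM]]] := min_weight_exists g0.
have [Mh [j1 [j2 hM]]] := min_weight_exists h0.
have := min_weightM gM hM; rewrite -FE => /(min_weight_profile F0w Fqw Fgap Fhi).
case=> _ /eqP; rewrite addn_eq0 => /andP[/eqP i10 /eqP j10] i2j2; subst i1 j1.
by apply: min_weight_unit_constant gM hM i2j2 _ => //; rewrite -coef0M -FE.
Qed.

End WeightedValuation.

Lemma coef_sum_monomials (R : nzSemiRingType) (c : nat -> R) lo hi k :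
  (\sum_(lo <= i < hi) (c i)%:P * 'X^i)`_k = if (lo <= k < hi)%N then c k else 0.
Proof.
elim: hi => [|hi IH]; first by rewrite big_geq // ltn0 andbF coef0.
case: (leqP lo hi) => lo_hi; last first.
  rewrite big_geq // coef0; case: (leqP lo k) => //= lo_k.
  by rewrite ltnS leqNgt (leq_trans lo_hi lo_k).
rewrite big_nat_recr //= coefD IH coefCM coefXn ltnS.
by case: (ltngtP k hi) => [kh|kh|->]; rewrite ?andbT ?andbF ?lo_hi /= ?mulr0 ?mulr1 ?addr0 ?add0r.
Qed.

Lemma coef_fpoly (a : nat -> int) p u q n k :
  (fpoly a p u q n)`_k =
  (if k == 0%N then (p ^ u)%N%:Z else 0) + (if (q <= k <= n)%N then a k else 0).
Proof. by rewrite /fpoly coefD coefC coef_sum_monomials. Qed.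

Lemma prod_norm_gt1 (R : numDomainType) (rs : seq R) :
  rs != [::] -> (forall z, z \in rs -> 1 < `|z|) -> 1 < \prod_(z <- rs) `|z|.
Proof.
case: rs => // z rs _ gt1; rewrite big_cons.
have rs_ge1 : \prod_(y <- rs | y \in rs) 1 <= \prod_(y <- rs | y \in rs) `|y|.
  by apply: ler_prod => y yrs; rewrite ler01 ltW // gt1 // in_cons yrs orbT.
rewrite big1_eq -big_seq in rs_ge1.
by apply: lt_le_trans (gt1 z (mem_head _ _)) _; apply: ler_peMr.
Qed.

(* A nonconstant integer polynomial with constant term +-1 has a complex root
   of modulus at most 1: the product of its roots has modulus 1 / |lead| <= 1. *)
Lemma root_in_unit_disk (d : {poly int}) : (1 < size d)%N -> absz d`_0 = 1%N ->
  exists2 z : algC, root (map_poly intr d) z & `|z| <= 1.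
Proof.
move=> size_d d01; set D := map_poly (intr : int -> algC) d.
have [rs Drs] := closed_field_poly_normal D.
have size_D : size D = size d by apply: size_map_inj_poly; [exact: intr_inj | exact: rmorph0].
have lead_D : lead_coef D = (lead_coef d)%:~R.
  by apply: lead_coef_map_inj; [exact: intr_inj | exact: rmorph0].
have lead_ge1 : 1 <= `|lead_coef D|.
  rewrite lead_D norm_intr_ge1 ?intr_int // intr_eq0 lead_coef_eq0.
  by rewrite -size_poly_gt0 ltnW.
have rs_nil : rs != [::].
  apply: contraTneq size_d => rs0; rewrite -size_D Drs rs0 big_nil.
  by rewrite -ltnNge size_scale ?size_poly1 // -normr_gt0 (lt_le_trans ltr01).
have D0 : `|lead_coef D| * \prod_(z <- rs) `|z| = 1.
  rewrite -[RHS](_ : `|D.[0]| = 1); last first.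
    by rewrite horner_coef0 coef_map /= -intr_norm -abszE d01.
  rewrite {2}Drs hornerZ horner_prod normrM normr_prod; congr (_ * _).
  by apply: eq_bigr => z _; rewrite hornerXsubC sub0r normrN.
have [z zrs z_le1] : exists2 z, z \in rs & `|z| <= 1.
  apply/hasP; apply: contraT => /hasPn not_le1.
  have gt1 : 1 < \prod_(z <- rs) `|z|.
    have := prod_norm_gt1 rs_nil; apply => z zrs.
    by rewrite real_ltNge ?normr_real ?real1 ?not_le1.
  have : \prod_(z <- rs) `|z| <= 1.
    by rewrite -[X in _ <= X]D0 ler_peMl // (le_trans ler01 (ltW gt1)).
  by rewrite (lt_geF gt1).
exists z => //; rewrite Drs rootZ ?root_prod_XsubC //.
by rewrite -normr_gt0 (lt_le_trans ltr01).
Qed.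

(* f has no root in the closed unit disk: there |f(z) - p^u| <= sum |a_i| < p^u. *)
Lemma fpoly_no_root_in_unit_disk (a : nat -> int) p u q n (z : algC) :
  \sum_(q <= i < n.+1) `|a i| < (p ^ u)%N%:Z -> `|z| <= 1 ->
  ~~ root (map_poly intr (fpoly a p u q n)) z.
Proof.
move=> small z_le1.
rewrite /root /fpoly rmorphD /= map_polyC rmorph_sum hornerD hornerC horner_sum /=.
under eq_bigr => i _ do rewrite rmorphM /= map_polyC map_polyXn hornerCM hornerXn.
set S := \sum_(_ <= _ < _) _.
have S_lt : `|S| < ((p ^ u)%N%:Z)%:~R.
  apply: le_lt_trans (ler_norm_sum _ _ _) _.
  apply: (@le_lt_trans _ _ ((\sum_(q <= i < n.+1) `|a i|)%:~R)); last by rewrite ltr_int.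
  rewrite rmorph_sum; apply: ler_sum => i _; rewrite normrM normrX -intr_norm.
  by rewrite ler_piMr ?exprn_ile1 // ler0z.
rewrite addrC addr_eq0; apply: contraTneq S_lt => ->.
by rewrite normrN -intr_norm ltxx.
Qed.

Lemma fpoly_unit_factor_const (a : nat -> int) p u q n (d e : {poly int}) :
  \sum_(q <= i < n.+1) `|a i| < (p ^ u)%N%:Z ->
  fpoly a p u q n = d * e -> absz d`_0 = 1%N -> (size d <= 1)%N.
Proof.
move=> small fde d01; rewrite leqNgt; apply/negP => /root_in_unit_disk/(_ d01)[z dz z_le1].
by move: (fpoly_no_root_in_unit_disk small z_le1); rewrite fde rmorphM rootM dz.
Qed.

Unset Implicit Arguments. Set Strict Implicit.

Theorem corollary1 (p q u n : nat) (a : nat -> int)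
  (hp : prime p) (hq : prime q) (hu : (1 <= u)%N) (hn : (q <= n)%N)
  (han : a n != 0)
  (hpq : ~~ (p%:Z %| a q)%Z)
  (hqu : ~~ (q %| u)%N)
  (hbig : \sum_(q <= i < n.+1) `|a i| < (p ^ u)%N%:Z) :
  irreducible_poly (map_poly (intr : int -> rat) (fpoly a p u q n)).
Proof.
set f := fpoly a p u q n.
have q_gt1 := prime_gt1 hq.
have f0 : f`_0 = (p ^ u)%N%:Z.
  by rewrite /f coef_fpoly eqxx leqn0 (gtn_eqF (ltnW q_gt1)) addr0.
have f_gap k : (0 < k < q)%N -> f`_k = 0.
  by case/andP=> k_gt0 kq; rewrite /f coef_fpoly (gtn_eqF k_gt0) leqNgt kq.
have fq : ~~ (p%:Z %| f`_q)%Z.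
  by rewrite /f coef_fpoly (gtn_eqF (ltnW q_gt1)) leqnn hn add0r.
have f_neq0 : f != 0 by apply: contraNneq fq => ->; rewrite coef0 dvdz0.
have size_f : (1 < size f)%N.
  apply: (leq_trans q_gt1 (ltnW (coef_lt_size _))); apply: contraNneq fq => ->; exact: dvdz0.
(* A divisor d of f over Q comes from an integer factorization f = d' * e;
   one factor has constant term +-1, hence is constant, so d is trivial. *)
split; first by rewrite size_rat_int_poly size_f.
move=> d size_d d_dvd; have [d' [c c0 dE] [e fde]] := dvdpP_rat_int d_dvd.
have [d'0 e0] : d' != 0 /\ e != 0 by apply/andP; rewrite -negb_or -mulf_eq0 -fde.
rewrite dE size_scale // size_rat_int_poly in size_d.
have [d'_unit|e_unit] := newton_unit_constant_factor hp (prime_gt0 hq) hq hu hqu f0 f_gap fq fde.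
- have := fpoly_unit_factor_const hbig fde d'_unit.
  by rewrite leq_eqVlt ltnS leqn0 size_poly_eq0 (negPf d'0) orbF (negPf size_d).
- have e1 : size e = 1%N.
    apply/eqP; rewrite eqn_leq size_poly_gt0 e0 andbT.
    by apply: fpoly_unit_factor_const hbig _ e_unit; rewrite -/f fde mulrC.
  rewrite -dvdp_size_eqp // dE size_scale // !size_rat_int_poly -/f fde size_mul //.
  by rewrite e1 addn1.
Qed.
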